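(* For all positive integers $n$, $$\sum_{j=0}^{n-2}\frac{A_{n,n-1,j}}{(1+x)^{n-1-j}(1+y)^{n-1-j}}+\frac{xy-(n-1)(x+y)}{xy}=\left(\frac{xy}{(1+x)(1+y)}\right)^{n-1}.$$
   Context: For a positive integer $n$ and $0\le j\le n-2$, $$A_{n,n-1,j}=\frac{(-1)^{n+j}}{xy}\sum_{l=j}^{n}\left(\binom lj\binom{n+j-1-l}{j}x^{l-j}y^{n-1-l}+\binom lj\binom{n+j-l}{j}x^{l-j}y^{n-l}\right),$$ where $x,y$ are indeterminates and binomial coefficients $\binom ab$ are $0$ if $b<0$ or $a<b$. *)

From HB Require Import structures.
From mathcomp Require Import all_boot all_order all_algebra.
Set Implicit Arguments. Unset Strict Implicit. Unset Printing Implicit Defensive.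
Import Order.TTheory GRing.Theory Num.Theory.
Local Open Scope ring_scope.

(* Binomial coefficient with integer top entry: 0 when a < 0
   (the bottom entry is a nat, so the case b < 0 never arises;
   the case a < b is handled by 'C itself). *)
Definition binz (a : int) (b : nat) : nat :=
  match a with
  | Posz m => 'C(m, b)
  | Negz _ => 0%N
  end.

(* A_{n,n-1,j}(x,y); exponents of y may be negative (integer powers). *)
Definition Acoef (F : fieldType) (x y : F) (n j : nat) : F :=
  (-1) ^+ (n + j) / (x * y) *
  \sum_(j <= l < n.+1)
    ( (binz l j * binz (n%:Z + j%:Z - 1 - l%:Z) j)%:R * x ^+ (l - j)
        * y ^ (n%:Z - 1 - l%:Z)
    + (binz l j * binz (n%:Z + j%:Z - l%:Z) j)%:R * x ^+ (l - j)
        * y ^ (n%:Z - l%:Z)).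

From HB Require Import structures.
From mathcomp Require Import all_boot all_order all_algebra.
From mathcomp Require Import ring zify.
Import Order.TTheory GRing.Theory Num.Theory.
Local Open Scope ring_scope.

(* A formal power series is represented by its coefficient sequence. Up to the
   factor (-1)^(n+j)/(xy), A_{n,n-1,j} is the coefficient of X^(n-j) in
   (1 + X)/((1 - xX)(1 - yX))^(j+1). With u = (1 + x)(1 + y), the sum in the
   theorem is therefore, up to two boundary terms, the coefficient of X^n in
   (1 + X) sum_j (-uX)^j/((1 - xX)(1 - yX))^(j+1) = (1 + X)/((1 - xX)(1 - yX) + uX),
   and (1 - xX)(1 - yX) + uX = (1 + X)(1 + xyX), so that coefficient is (-xy)^n. *)

Section GeneratingSequences.

Set Implicit Arguments.
Unset Strict Implicit.

Variable R : comPzRingType.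
Implicit Types (f g : nat -> R) (x y c : R).

(* [mulX f], [mul1X f] and [mul_den x y f] are X f, (1 + X) f and
   (1 - xX)(1 - yX) f. *)
Definition mulX f k : R := if k is k'.+1 then f k' else 0.
Definition mul1X f k : R := f k + mulX f k.
Definition mul_den x y f k : R :=
  f k - (x + y) * mulX f k + x * y * mulX (mulX f) k.

Lemma mulX_eq f g : f =1 g -> mulX f =1 mulX g.
Proof. by move=> fg [|k] //=. Qed.

Lemma mul1X_eq f g : f =1 g -> mul1X f =1 mul1X g.
Proof. by move=> fg k; rewrite /mul1X fg (mulX_eq fg). Qed.

Lemma mul_den_mul1X x y f k :
  mul_den x y (mul1X f) k = mul1X (mul_den x y f) k.
Proof. by case: k => [|[|k]]; rewrite /mul_den /mul1X /=; ring. Qed.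

Lemma mul_den_mulX_factor x y f k :
  mul_den x y f k + (1 + x) * (1 + y) * mulX f k
  = mul1X (fun i => f i + x * y * mulX f i) k.
Proof. by case: k => [|[|k]]; rewrite /mul_den /mul1X /=; ring. Qed.

Lemma eq_mulX_rec c f g :
  (forall k, f k + c * mulX f k = g k + c * mulX g k) -> f =1 g.
Proof.
move=> fg; elim=> [|k IHk]; first by have := fg 0%N; rewrite /= !mulr0 !addr0.
by have := fg k.+1; rewrite /= IHk => /addIr.
Qed.

(* The coefficients of (1 - xX)^-(p+1) (1 - yX)^-(q+1). *)
Definition bicoef x y (p q k : nat) : R :=
  \sum_(i < k.+1) ('C(i + p, p) * 'C(k - i + q, q))%:R * x ^+ i * y ^+ (k - i).

Lemma bicoefC x y p q k : bicoef x y p q k = bicoef y x q p k.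
Proof.
rewrite /bicoef (reindex_inj rev_ord_inj) /=.
apply: eq_bigr => i _; have := ltn_ord i; rewrite subSS => le_ik.
by rewrite subKn // mulnC; ring.
Qed.

Lemma bicoefSl x y p q k :
  bicoef x y p.+1 q k = x * mulX (bicoef x y p.+1 q) k + bicoef x y p q k.
Proof.
case: k => [|k]; first by rewrite /bicoef !big_ord1 /= !add0n !binn; ring.
rewrite /= /bicoef big_ord_recl [X in _ = _ + X]big_ord_recl /= mulr_sumr.
rewrite !add0n !binn addrCA -big_split; congr (_ + _).
apply: eq_bigr => i _ /=; rewrite subSS !addSn !addnS binS /bump /= add1n.
rewrite mulnDl natrD !natrM exprS; ring.
Qed.

Lemma bicoefSr x y p q k :
  bicoef x y p q.+1 k = y * mulX (bicoef x y p q.+1) k + bicoef x y p q k.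
Proof.
rewrite !(bicoefC x y) bicoefSl; congr (_ * _ + _).
by apply: mulX_eq => i; rewrite bicoefC.
Qed.

Lemma mul_den_bicoefSS x y j k :
  mul_den x y (bicoef x y j.+1 j.+1) k = bicoef x y j j k.
Proof.
have XSl : mulX (bicoef x y j j.+1) k
    = mulX (bicoef x y j.+1 j.+1) k - x * mulX (mulX (bicoef x y j.+1 j.+1)) k.
  by case: k => [|k] /=; [ring | rewrite (bicoefSl x y j j.+1 k); ring].
rewrite /mul_den bicoefSl bicoefSr XSl; ring.
Qed.

Lemma bicoef00S x y k :
  bicoef x y 0 0 k.+1 = y ^+ k.+1 + x * bicoef x y 0 0 k.
Proof.
rewrite /bicoef big_ord_recl /= mulr_sumr !bin0 mul1n; congr (_ + _); first ring.
by apply: eq_bigr => i _; rewrite /bump /= add1n subSS !bin0 exprS; ring.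
Qed.

Lemma mul_den_bicoef00 x y k : mul_den x y (bicoef x y 0 0) k = (k == 0)%:R.
Proof.
have b0 : bicoef x y 0 0 0 = 1 by rewrite /bicoef big_ord1 /= bin0; ring.
case: k => [|[|k]]; rewrite /mul_den /=.
- by rewrite b0; ring.
- by rewrite bicoef00S b0; ring.
- by rewrite !bicoef00S !exprS; ring.
Qed.

Lemma mul1X_bicoef0 x y j : mul1X (bicoef x y j j) 0 = 1.
Proof. by rewrite /mul1X /bicoef big_ord1 /= add0n binn; ring. Qed.

Lemma mul1X_bicoef1 x y j : mul1X (bicoef x y j j) 1 = 1 + j.+1%:R * (x + y).
Proof.
rewrite /mul1X /bicoef /= big_ord1 big_ord_recr big_ord1 /= !add0n add1n.
by rewrite binn binSn subnn !muln1 !mul1n; ring.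
Qed.

(* The coefficients of sum_j (cX)^j E_j. *)
Definition powsum c (E : nat -> nat -> R) K : R :=
  \sum_(j < K.+1) c ^+ j * E j (K - j)%N.

Lemma mulX_powsum c E K : mulX (powsum c E) K = powsum c (fun j => mulX (E j)) K.
Proof.
case: K => [|K]; first by rewrite /powsum big_ord1 /= mulr0.
rewrite /powsum [RHS]big_ord_recr /= subnn mulr0 addr0.
by apply: eq_bigr => i _; rewrite subSn // -ltnS.
Qed.

Lemma mul_den_powsum x y c E K :
  mul_den x y (powsum c E) K = powsum c (fun j => mul_den x y (E j)) K.
Proof.
rewrite /mul_den mulX_powsum (mulX_eq (mulX_powsum c E)) !mulX_powsum.
rewrite /powsum !mulr_sumr -sumrB -big_split /=.
by apply: eq_bigr => i _; ring.
Qed.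

Definition dseq x y : nat -> R :=
  powsum (- ((1 + x) * (1 + y))) (fun j => mul1X (bicoef x y j j)).

Lemma mul_den_dseq x y K :
  mul_den x y (dseq x y) K + (1 + x) * (1 + y) * mulX (dseq x y) K
  = mul1X (fun k => (k == 0)%:R) K.
Proof.
rewrite /dseq mul_den_powsum /powsum big_ord_recl /= subn0 mul1r.
rewrite mul_den_mul1X (mul1X_eq (mul_den_bicoef00 x y)) -addrA -[RHS]addr0.
congr (_ + _); case: K => [|K] /=; first by rewrite big_ord0 mulr0 addr0.
rewrite mulr_sumr -big_split big1 //= => i _.
rewrite /bump /= add1n subSS mul_den_mul1X (mul1X_eq (mul_den_bicoefSS x y i)).
by rewrite exprS; ring.
Qed.

Lemma dseqE x y K : dseq x y K = (- (x * y)) ^+ K.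
Proof.
pose delta (k : nat) : R := (k == 0)%:R.
have dseq_delta : (fun k => dseq x y k + x * y * mulX (dseq x y) k) =1 delta.
  apply: (@eq_mulX_rec 1) => k; rewrite !mul1r.
  by rewrite -[LHS]/(mul1X _ k) -mul_den_mulX_factor mul_den_dseq.
apply: (@eq_mulX_rec (x * y)) => k; rewrite dseq_delta /delta.
by case: k => [|k] /=; rewrite ?exprS; ring.
Qed.

End GeneratingSequences.

Lemma binz_pred_small j : binz (j%:Z - 1) j = 0%N.
Proof.
case: j => [|j] //; have -> : j.+1%:Z - 1 = j by lia.
by rewrite /= bin_small.
Qed.

Lemma AcoefE (F : fieldType) (x y : F) n j : (j < n)%N ->
  Acoef x y n j = (-1) ^+ (n + j) / (x * y) * mul1X (bicoef x y j j) (n - j).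
Proof.
move=> lt_jn; have [k ->] : exists k, n = (k.+1 + j)%N by exists (n - j).-1; lia.
rewrite /Acoef addnK; congr (_ * _).
rewrite -{1}(add0n j) big_addn.
have -> : ((k.+1 + j).+1 - j = k.+2)%N by lia.
rewrite big_mkord big_split /= /mul1X /= [RHS]addrC; congr (_ + _).
  rewrite big_ord_recr /=.
  have -> : (k.+1 + j)%:Z + j%:Z - 1 - (k.+1 + j)%:Z = j%:Z - 1 by lia.
  rewrite binz_pred_small muln0 !mul0r addr0.
  apply: eq_bigr => i _; have := ltn_ord i => lt_ik.
  have -> : (k.+1 + j)%:Z + j%:Z - 1 - (i + j)%:Z = (k - i + j)%N :> int by lia.
  have -> : (k.+1 + j)%:Z - 1 - (i + j)%:Z = (k - i)%N :> int by lia.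
  by rewrite addnK.
apply: eq_bigr => i _; have := ltn_ord i => lt_ik.
have -> : (k.+1 + j)%:Z + j%:Z - (i + j)%:Z = (k.+1 - i + j)%N :> int by lia.
have -> : (k.+1 + j)%:Z - (i + j)%:Z = (k.+1 - i)%N :> int by lia.
by rewrite addnK.
Qed.

Theorem lemma7 (F : fieldType) (x y : F) (n : nat)
  (hx : x != 0) (hy : y != 0) (hx1 : 1 + x != 0) (hy1 : 1 + y != 0)
  (hn : (0 < n)%N) :
  \sum_(0 <= j < n.-1)
      Acoef x y n j / ((1 + x) ^+ (n.-1 - j) * (1 + y) ^+ (n.-1 - j))
    + (x * y - (n.-1)%:R * (x + y)) / (x * y)
  = (x * y / ((1 + x) * (1 + y))) ^+ n.-1.
Proof.
case: n hn => [//|m] _ /=; set u := (1 + x) * (1 + y).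
have u_neq0 : u != 0 by rewrite mulf_neq0.
have termE (j : 'I_m) : Acoef x y m.+1 j / ((1 + x) ^+ (m - j) * (1 + y) ^+ (m - j))
    = (-1) ^+ m.+1 / (x * y * u ^+ m)
      * ((- u) ^+ j * mul1X (bicoef x y j j) (m.+1 - j)).
  have uXm : u ^+ m = u ^+ (m - j) * u ^+ j by rewrite -exprD subnK // ltnW.
  rewrite AcoefE; last exact: ltnW (ltn_ord j).
  rewrite uXm -exprMn -/u (exprNn u) exprD.
  by field; rewrite hx hy !expf_neq0.
rewrite big_mkord (eq_bigr _ (fun j _ => termE j)) -mulr_sumr.
have := dseqE x y m.+1; rewrite /dseq /powsum 2!big_ord_recr /= subnn subSnn.
rewrite mul1X_bicoef0 mul1X_bicoef1 -/u => /(canRL (addrK _))/(canRL (addrK _)) ->.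
rewrite (exprNn (x * y)) !(exprNn u) !exprS -signr_odd expr_div_n -natr1.
by rewrite /u; case: (odd m); field; rewrite hx hy expf_neq0.
Qed.
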